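(* Let $0<\alpha\le 2\pi/3$ and let $u,v\in V$ with $\{u,v\}\in E$. Then either $(u,v)\in N_\alpha$, or there is a sequence $u_0,\dots,u_m$ with $u_0=u$, $u_m=v$, and for all $i=0,\dots,m-1$: $(u_i,u_{i+1})\in N_\alpha$ and $d(u_i,u_{i+1})<d(u,v)$.
   Context: Let $V$ be a finite set of pairwise distinct points (nodes) in the Euclidean plane, $d$ the Euclidean distance, and $R>0$. Let $G_R=(V,E)$ be the undirected graph with $E=\{\{u,v\}: u\neq v,\ d(u,v)\le R\}$. Fix a finite increasing sequence of radius levels $0<r_1<r_2<\dots<r_k=R$. For $u\in V$ and $1\le i\le k$ let $S_i(u)=\{v\in V\setminus\{u\}: d(u,v)\le r_i\}$. For $0<\alpha<2\pi$, a closed cone of width $\alpha$ with apex $u$ is a set $\{u+t(\cos\varphi,\sin\varphi): t\ge 0,\ \varphi\in[\theta-\alpha/2,\theta+\alpha/2]\}$ for some $\theta$. A finite set $S\subseteq V\setminus\{u\}$ has an $\alpha$-gap (at $u$) if some closed cone of width $\alpha$ with apex $u$ contains no node of $S$ (in particular $\emptyset$ has an $\alpha$-gap). The algorithm CBTC($\alpha$) assigns to each $u$ the index $i_u$ = the least $i\in\{1,\dots,k\}$ such that $S_i(u)$ has no $\alpha$-gap, or $i_u=k$ if there is no such $i$; set $N_\alpha(u)=S_{i_u}(u)$ and $N_\alpha=\{(u,v): v\in N_\alpha(u)\}$ (a directed relation, not necessarily symmetric). *)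

From Stdlib Require Import Reals List.
Open Scope R_scope.

Definition point : Type := (R * R)%type.

Definition edist (p q : point) : R :=
  sqrt ((fst p - fst q)^2 + (snd p - snd q)^2).

Definition radius_levels (k : nat) (r : nat -> R) (Rmax : R) : Prop :=
  (1 <= k)%nat /\ 0 < r 1%nat /\
  (forall i, (1 <= i)%nat -> (i < k)%nat -> r i < r (S i)) /\
  r k = Rmax.

Definition Sset (V : list point) (r : nat -> R) (i : nat) (u v : point) : Prop :=
  In v V /\ v <> u /\ edist u v <= r i.

Definition in_cone (u : point) (alpha theta : R) (p : point) : Prop :=
  exists t phi, 0 <= t /\ theta - alpha / 2 <= phi <= theta + alpha / 2 /\
    p = (fst u + t * cos phi, snd u + t * sin phi).

Definition has_gap (alpha : R) (u : point) (Sp : point -> Prop) : Prop :=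
  exists theta, forall p, Sp p -> ~ in_cone u alpha theta p.

Definition cbtc_index (alpha : R) (V : list point) (k : nat) (r : nat -> R)
    (u : point) (i : nat) : Prop :=
  ((1 <= i)%nat /\ (i <= k)%nat /\ ~ has_gap alpha u (Sset V r i u) /\
     (forall j, (1 <= j)%nat -> (j < i)%nat -> has_gap alpha u (Sset V r j u)))
  \/
  (i = k /\ forall j, (1 <= j)%nat -> (j <= k)%nat -> has_gap alpha u (Sset V r j u)).

Definition N_alpha (alpha : R) (V : list point) (k : nat) (r : nat -> R)
    (u v : point) : Prop :=
  exists i, cbtc_index alpha V k r u i /\ Sset V r i u v.

(* Induction on the distance d(u,v) over the finitely many nodes.  Node u
   either reaches v at its chosen level, or that level has no alpha-gap and
   all its neighbours are strictly closer to u than v is.  Then the cone of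
   width alpha <= 2 pi / 3 pointing from u towards v contains a neighbour w;
   the angle at u of the triangle u w v is at most pi / 3 and d(u,w) < d(u,v),
   so d(w,v) < d(u,v) by the law of cosines, and the induction continues
   from w. *)
From Stdlib Require Import Reals List Lra Lia Psatz Classical Wf_nat.
Open Scope R_scope.

Lemma unit_vector_angle (c s : R) : c ^ 2 + s ^ 2 = 1 ->
  exists theta, c = cos theta /\ s = sin theta.
Proof.
  intros Hcs.
  assert (Hc : -1 <= c <= 1) by nra.
  assert (Hsin : sin (acos c) = Rabs s).
  { rewrite sin_acos by exact Hc.
    replace (1 - c²) with (s²) by (unfold Rsqr; lra).
    apply sqrt_Rsqr_abs. }
  destruct (Rle_dec 0 s) as [Hs | Hs].
  - exists (acos c). rewrite cos_acos, Hsin, Rabs_right by lra. lra.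
  - exists (- acos c). rewrite cos_neg, sin_neg, cos_acos, Hsin, Rabs_left by lra. lra.
Qed.

Definition polar_shift (u : point) (t phi : R) : point :=
  (fst u + t * cos phi, snd u + t * sin phi).

Lemma edist_polar_shift (u : point) (t phi : R) : 0 <= t ->
  edist u (polar_shift u t phi) = t.
Proof.
  intros Ht. unfold edist, polar_shift; cbn [fst snd].
  replace ((fst u - (fst u + t * cos phi)) ^ 2 + (snd u - (snd u + t * sin phi)) ^ 2)
    with (t ^ 2 * ((sin phi)² + (cos phi)²)) by (unfold Rsqr; ring).
  rewrite sin2_cos2, Rmult_1_r. apply sqrt_pow2, Ht.
Qed.

Lemma polar_shift_edist (u v : point) : u <> v ->
  exists theta, v = polar_shift u (edist u v) theta.
Proof.
  intros Huv. set (a := fst v - fst u). set (b := snd v - snd u).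
  assert (Hd2 : edist u v ^ 2 = a ^ 2 + b ^ 2).
  { unfold edist. rewrite pow2_sqrt; [unfold a, b; ring|].
    apply Rplus_le_le_0_compat; apply pow2_ge_0. }
  assert (Hd : 0 < edist u v).
  { apply sqrt_lt_R0. unfold a, b in *.
    destruct (Req_dec (fst v - fst u) 0), (Req_dec (snd v - snd u) 0); [|nra..].
    exfalso. apply Huv. rewrite (surjective_pairing u), (surjective_pairing v).
    f_equal; lra. }
  destruct (unit_vector_angle (a / edist u v) (b / edist u v)) as [theta [Ec Es]].
  { field_simplify; [rewrite <- Hd2; field|]; lra. }
  exists theta. unfold polar_shift. rewrite <- Ec, <- Es.
  rewrite (surjective_pairing v) at 1. unfold a, b. f_equal; field; lra.
Qed.

Lemma cos_ge_half (x : R) : Rabs x <= PI / 3 -> 1 / 2 <= cos x.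
Proof.
  intros Hx. rewrite <- cos_PI3. pose proof PI_RGT_0.
  unfold Rabs in Hx. destruct (Rcase_abs x); [rewrite <- (cos_neg x)|];
    apply cos_decr_1; lra.
Qed.

(* Law of cosines: the squared distance is t^2 + d^2 - 2 t d cos(phi - theta) <= d^2 - t (d - t). *)
Lemma edist_polar_shift_lt (u : point) (t d phi theta : R) :
  0 < t < d -> 1 / 2 <= cos (phi - theta) ->
  edist (polar_shift u t phi) (polar_shift u d theta) < d.
Proof.
  intros Htd Hcos. rewrite cos_minus in Hcos.
  unfold edist, polar_shift; cbn [fst snd].
  apply Rlt_le_trans with (sqrt (d ^ 2)); [|rewrite sqrt_pow2; lra].
  apply sqrt_lt_1_alt. split; [apply Rplus_le_le_0_compat; apply pow2_ge_0 |].
  set (C := cos phi * cos theta + sin phi * sin theta) in Hcos.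
  match goal with |- ?L < _ =>
    replace L with (t ^ 2 * ((sin phi)² + (cos phi)²) + d ^ 2 * ((sin theta)² + (cos theta)²)
                    - 2 * (t * d * C)) by (unfold C, Rsqr; ring) end.
  rewrite !sin2_cos2.
  assert (Hcross : t * d * (1 / 2) <= t * d * C) by (apply Rmult_le_compat_l; nra).
  nra.
Qed.

Lemma gapless_closer_point (alpha : R) (u v : point) (S : point -> Prop) :
  alpha <= 2 * PI / 3 -> u <> v -> ~ has_gap alpha u S ->
  (forall p, S p -> p <> u /\ edist u p < edist u v) ->
  exists w, S w /\ edist w v < edist u v.
Proof.
  intros Halpha Huv Hgap HS.
  destruct (polar_shift_edist u v Huv) as [theta Ev].
  assert (Hcone : exists p, S p /\ in_cone u alpha theta p).
  { apply NNPP. intros Hno. apply Hgap. exists theta. intros p Sp Hp. apply Hno. eauto. }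
  destruct Hcone as [p [Sp [t [phi [Ht [Hphi Ep]]]]]].
  fold (polar_shift u t phi) in Ep.
  exists p. split; [exact Sp|].
  destruct (HS p Sp) as [Hpu Hclose].
  rewrite Ep, edist_polar_shift in Hclose by exact Ht.
  assert (Ht0 : t <> 0).
  { intros ->. apply Hpu. rewrite Ep, (surjective_pairing u).
    unfold polar_shift; cbn [fst snd]. f_equal; ring. }
  rewrite Ep, Ev at 1. apply edist_polar_shift_lt; [lra|].
  apply cos_ge_half, Rabs_le. lra.
Qed.

Definition N_path (alpha : R) (V : list point) (k : nat) (r : nat -> R)
    (d : R) (u v : point) : Prop :=
  exists (m : nat) (s : nat -> point),
    s 0%nat = u /\ s m = v /\
    forall i, (i < m)%nat ->
      N_alpha alpha V k r (s i) (s (S i)) /\ edist (s i) (s (S i)) < d.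

Section CBTC.

Variables (V : list point) (k : nat) (r : nat -> R) (Rmax alpha : R).
Hypothesis levels : radius_levels k r Rmax.
Hypothesis alpha_le : alpha <= 2 * PI / 3.

Lemma N_path_edge (d : R) (u v : point) :
  N_alpha alpha V k r u v -> edist u v < d -> N_path alpha V k r d u v.
Proof.
  intros HN Hd. exists 1%nat, (fun n => if Nat.eqb n 0 then u else v).
  split; [reflexivity|]. split; [reflexivity|].
  intros i Hi. replace i with 0%nat by lia. split; assumption.
Qed.

Lemma N_path_cons (d : R) (u w v : point) :
  N_alpha alpha V k r u w -> edist u w < d -> N_path alpha V k r d w v ->
  N_path alpha V k r d u v.
Proof.
  intros HN Hd [m [s [Hs0 [Hsm Hs]]]].
  exists (S m), (fun n => match n with 0%nat => u | S n' => s n' end).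
  split; [reflexivity|]. split; [exact Hsm|].
  intros [|i] Hi; [rewrite Hs0; split; assumption|].
  apply Hs. lia.
Qed.

Lemma N_path_mono (d1 d2 : R) (u v : point) :
  d1 <= d2 -> N_path alpha V k r d1 u v -> N_path alpha V k r d2 u v.
Proof.
  intros Hd [m [s [Hs0 [Hsm Hs]]]]. exists m, s. split; [exact Hs0|]. split; [exact Hsm|].
  intros i Hi. destruct (Hs i Hi) as [HN Hdi]. split; [exact HN | lra].
Qed.

Lemma cbtc_index_spec (u : point) :
  exists i, cbtc_index alpha V k r u i /\
    (~ has_gap alpha u (Sset V r i u) \/ r i = Rmax).
Proof.
  destruct levels as [Hk [_ [_ Hrk]]].
  set (P := fun j => ((1 <= j)%nat /\ (j <= k)%nat) /\ ~ has_gap alpha u (Sset V r j u)).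
  destruct (classic (exists j, P j)) as [HP | HnoP].
  - destruct (dec_inh_nat_subset_has_unique_least_element P (fun n => classic (P n)) HP)
      as [i [[[[Hi1 Hik] Hgap] Hleast] _]].
    exists i. split; [|left; exact Hgap].
    left. repeat split; try assumption.
    intros j Hj1 Hji. apply NNPP. intros Hg.
    assert (Hjk : (j <= k)%nat) by lia.
    specialize (Hleast j (conj (conj Hj1 Hjk) Hg)). lia.
  - exists k. split; [|right; exact Hrk].
    right. split; [reflexivity|]. intros j Hj1 Hjk.
    apply NNPP. intros Hg. apply HnoP. exists j. split; [split|]; assumption.
Qed.

Lemma N_alpha_or_closer_neighbour (u v : point) :
  In v V -> u <> v -> edist u v <= Rmax ->
  N_alpha alpha V k r u v \/
  exists w, In w V /\ N_alpha alpha V k r u w /\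
    edist u w < edist u v /\ edist w v < edist u v.
Proof.
  intros Hv Huv Hd.
  destruct (cbtc_index_spec u) as [i [Hi Hgap]].
  destruct (Rle_dec (edist u v) (r i)) as [Hle | Hgt].
  { left. exists i. split; [exact Hi|]. repeat split; auto. }
  right. destruct Hgap as [Hgap | Hri]; [|lra].
  destruct (gapless_closer_point alpha u v (Sset V r i u) alpha_le Huv Hgap)
    as [w [Hw Hwv]].
  { intros p [_ [Hpu Hp]]. split; [exact Hpu | lra]. }
  exists w. destruct Hw as [HwV [Hwu Huw]].
  repeat split; [exact HwV | exists i; repeat split; assumption | lra | exact Hwv].
Qed.

Definition closer_than (v : point) (d : R) (w : point) : bool :=
  if Rlt_dec (edist w v) d then true else false.

Definition closer_count (v : point) (d : R) : nat := length (filter (closer_than v d) V).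

Lemma closer_count_lt (v w : point) (d : R) :
  In w V -> edist w v < d -> (closer_count v (edist w v) < closer_count v d)%nat.
Proof.
  unfold closer_count. intros Hw Hd. induction V as [|x l IH]; [destruct Hw|].
  assert (Hle : (length (filter (closer_than v (edist w v)) l)
                 <= length (filter (closer_than v d) l))%nat).
  { clear IH Hw. induction l as [|y l IHl]; simpl; [lia|]. unfold closer_than in *.
    destruct (Rlt_dec (edist y v) (edist w v)), (Rlt_dec (edist y v) d); simpl; lra || lia. }
  simpl. unfold closer_than in *.
  destruct Hw as [-> | Hw].
  - destruct (Rlt_dec (edist w v) (edist w v)), (Rlt_dec (edist w v) d); simpl; lra || lia.
  - specialize (IH Hw).
    destruct (Rlt_dec (edist x v) (edist w v)), (Rlt_dec (edist x v) d); simpl; lra || lia.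
Qed.

Lemma N_alpha_or_short_N_path (v : point) :
  In v V -> forall u, u <> v -> edist u v <= Rmax ->
  N_alpha alpha V k r u v \/ N_path alpha V k r (edist u v) u v.
Proof.
  intros Hv u. pattern u.
  apply (induction_ltof1 _ (fun u => closer_count v (edist u v))).
  clear u. intros u IH Huv Hd.
  destruct (N_alpha_or_closer_neighbour u v Hv Huv Hd) as [HN | [w [Hw [Huw [Hwu Hwv]]]]];
    [left; exact HN | right].
  assert (Hwv_neq : w <> v) by (intros ->; lra).
  apply (N_path_cons _ u w v Huw Hwu).
  destruct (IH w (closer_count_lt v w _ Hw Hwv) Hwv_neq ltac:(lra)) as [HN | Hpath].
  - exact (N_path_edge _ w v HN Hwv).
  - exact (N_path_mono _ _ w v (Rlt_le _ _ Hwv) Hpath).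
Qed.

End CBTC.

Theorem lemma2 (V : list point) (Rmax : R) (k : nat) (r : nat -> R) (alpha : R)
  (u v : point) :
  NoDup V -> 0 < Rmax -> radius_levels k r Rmax ->
  0 < alpha -> alpha <= 2 * PI / 3 ->
  In u V -> In v V -> u <> v -> edist u v <= Rmax ->
  N_alpha alpha V k r u v \/
  exists (m : nat) (s : nat -> point),
    s 0%nat = u /\ s m = v /\
    forall i, (i < m)%nat ->
      N_alpha alpha V k r (s i) (s (S i)) /\ edist (s i) (s (S i)) < edist u v.
Proof.
  intros _ _ Hlevels _ Halpha _ Hv Huv Hd.
  exact (N_alpha_or_short_N_path V k r Rmax alpha Hlevels Halpha v Hv u Huv Hd).
Qed.
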